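(* Let $k\ge1$ and let $\mu_k$ be an LTI probability measure on $X_k=\{0,1\}^{\{0,\ldots,k\}}$. Suppose there is a bijection $\phi:X_k\to X_k$ with $\mu_k(\phi(\eta))=\mu_k(\eta)$ for all $\eta$ and $\phi(\{0\xi,1\xi\})=\{\xi0,\xi1\}$ for every binary string $\xi$ of length $k$. Then $\mu_k$ has a translation invariant extension $\mu$ to $\{0,1\}^{\mathbb{Z}}$ with total entropy $S(\mu)=S(\mu_k)$; consequently $\mu$ has minimal total entropy among all translation invariant extensions of $\mu_k$. Explicitly, if $P_1,\ldots,P_n$ are the orbits of $\phi$, each viewed as a closed path in the de Bruijn graph $G_k$ with edges $\eta,\phi(\eta),\phi^2(\eta),\ldots$, and $w_i$ is the common value of $\mu_k$ on the edges of $P_i$, then $\mu=\sum_{i=1}^n w_i|P_i|\,\nu_{P_i}$.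
   Context: Total entropy $S(\mu)=\lim_{j\to\infty}S(\pi_j\mu)$, with $\pi_j\mu$ the marginal on coordinates $0,\ldots,j$ and $S$ the Gibbs–Shannon entropy. De Bruijn graph $G_k$: vertices binary strings of length $k$, edges binary strings of length $k+1$, edge $a\theta b$ from $a\theta$ to $\theta b$. For a closed path $P$ with edges $\eta^{(1)},\ldots,\eta^{(p)}$ that is not a repetition of a shorter closed path, $\nu_P$ gives mass $1/p$ to each of the $p$ translates of the periodic configuration obtained by traversing $P$ repeatedly and recording the first symbol of each edge. LTI: for $A,A'\subset\{0,\ldots,k\}$ with $A'$ a translate of $A$, the marginals on $A'$ and $A$ agree up to translation. *)

From HB Require Import structures.
From mathcomp Require Import all_boot all_order all_fingroup.
From Stdlib Require Import Reals.

Set Implicit Arguments.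
Unset Strict Implicit.
Unset Printing Implicit Defensive.

Notation "\rsum_ ( i : T ) F" := (\big[Rplus/0%R]_(i : T) F)
  (at level 41, F at level 41, i, T at level 50).

(* X_k = {0,1}^{0..k} : binary words of length k+1 (false = 0, true = 1). *)
Notation Xk k := ((k.+1).-tuple bool).

Definition prob_Xk (k : nat) (muk : Xk k -> R) : Prop :=
  (forall x, (0 <= muk x)%R) /\ \big[Rplus/0%R]_(x : Xk k) muk x = 1%R.

Definition marg (k : nat) (muk : Xk k -> R) (A : seq nat) (a : nat -> bool) : R :=
  \big[Rplus/0%R]_(x : Xk k | all (fun i => nth false x i == a i) A) muk x.

Definition LTI (k : nat) (muk : Xk k -> R) : Prop :=
  forall (A : seq nat) (t : nat) (a : nat -> bool),
    all (fun i => i + t <= k) A ->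
    marg muk A a = marg muk [seq i + t | i <- A] (fun j => a (j - t)).

(* A translation invariant probability measure on {0,1}^Z, represented (via
   the Kolmogorov extension theorem) by its cylinder masses:
   mu w = mu{ x : x_0 .. x_{n-1} = w } (= mass of w at any position). *)
Definition ti_measure (mu : seq bool -> R) : Prop :=
  mu [::] = 1%R /\
  (forall w, (0 <= mu w)%R) /\
  (forall w, mu w = (mu (rcons w false) + mu (rcons w true))%R) /\
  (forall w, mu w = (mu (false :: w) + mu (true :: w))%R).

Definition extends (k : nat) (mu : seq bool -> R) (muk : Xk k -> R) : Prop :=
  forall x : Xk k, mu (val x) = muk x.

Definition plogp (p : R) : R := if Rle_dec p 0 then 0%R else (p * ln p)%R.

Definition entropy_Xk (k : nat) (muk : Xk k -> R) : R :=
  (- \big[Rplus/0%R]_(x : Xk k) plogp (muk x))%R.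

Definition marg_entropy (mu : seq bool -> R) (j : nat) : R :=
  (- \big[Rplus/0%R]_(w : (j.+1).-tuple bool) plogp (mu (val w)))%R.

Definition total_entropy_is (mu : seq bool -> R) (L : R) : Prop :=
  Un_cv (marg_entropy mu) L.

Definition deBruijn_compatible (k : nat) (phi : {perm Xk k}) : Prop :=
  forall xi : k.-tuple bool,
    phi @: [set [tuple of false :: xi]; [tuple of true :: xi]] =
    [set [tuple of rcons xi false]; [tuple of rcons xi true]].

Definition default_Xk (k : nat) : Xk k := [tuple of nseq k.+1 false].

Definition orbit_start (k : nat) (P : {set Xk k}) : Xk k :=
  odflt (default_Xk k) [pick x in P].

(* nu_P for the closed path P = (eta, phi eta, phi^2 eta, ...) of length p = |P|:
   the periodic configuration records the first symbol of each edge,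
   x_t = first symbol of phi^t(eta); nu_P gives mass 1/p to each of its p
   translates, so nu_P(cylinder w at 0..n-1) = (1/p) #{t < p : x_{t+m} = w_m, m < n}. *)
Definition nu_orbit (k : nat) (phi : {perm Xk k}) (P : {set Xk k}) (w : seq bool) : R :=
  let eta := orbit_start P in
  (/ INR #|P| *
   INR #|[set t : 'I_#|P| |
          all (fun m => tnth (iter (t + m) phi eta) ord0 == nth false w m)
              (iota 0 (size w))]|)%R.

(* mu = sum_i w_i |P_i| nu_{P_i}, over the orbits P_i of phi, with w_i the
   (common) value of mu_k on the edges of P_i. *)
Definition orbit_measure (k : nat) (muk : Xk k -> R) (phi : {perm Xk k})
  (w : seq bool) : R :=
  \big[Rplus/0%R]_(P in porbits phi)
     (muk (orbit_start P) * INR #|P| * nu_orbit phi P w)%R.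

From HB Require Import structures.
From mathcomp Require Import all_boot all_order all_fingroup.
From Stdlib Require Import Reals Lra.

(* The de Bruijn condition says that phi drops the first symbol of a word and
   appends a new one, so the first symbols of y, phi y, phi^2 y, ... read the
   word y itself and then continue it.  Hence mu(w) is the mu_k-mass of the
   edges y whose phi-orbit reads w from y on.  This mu is translation
   invariant (for left extensions reindex the sum by phi, which preserves
   mu_k), extends mu_k, and for windows of length >= k+1 the reading map is
   injective, so S(pi_j mu) = S(mu_k) for every j >= k.  Minimality holds
   because p ln p is superadditive, which makes j |-> S(pi_j nu) nondecreasing
   for every translation invariant nu, so S(nu) >= S(pi_k nu) = S(mu_k). *)

Set Implicit Arguments.
Unset Strict Implicit.
Unset Printing Implicit Defensive.

HB.instance Definition _ := Monoid.isComLaw.Build R 0%R Rplus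
  (fun x y z => esym (Rplus_assoc x y z)) Rplus_comm Rplus_0_l.

Lemma Rsum_const (T : finType) (A : {pred T}) (c : R) :
  \big[Rplus/0%R]_(x in A) c = (INR #|A| * c)%R.
Proof.
rewrite big_const; elim: #|A| => [|n IH]; first by rewrite Rmult_0_l.
by rewrite iterS IH S_INR; ring.
Qed.

Lemma Rsum_ge0 (I : finType) (P : pred I) (F : I -> R) :
  (forall i, P i -> 0 <= F i)%R -> (0 <= \big[Rplus/0%R]_(i | P i) F i)%R.
Proof.
move=> F_ge0; apply: (big_ind (fun x => 0 <= x)%R) => //; first exact: Rle_refl.
exact: Rplus_le_le_0_compat.
Qed.

Lemma Rsum_le (I : finType) (P : pred I) (F G : I -> R) :
  (forall i, P i -> F i <= G i)%R ->
  (\big[Rplus/0%R]_(i | P i) F i <= \big[Rplus/0%R]_(i | P i) G i)%R.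
Proof.
move=> FG; apply: (big_ind2 (fun x y => x <= y)%R) => //; first exact: Rle_refl.
exact: Rplus_le_compat.
Qed.

Lemma plogp0 : plogp 0 = 0%R.
Proof. by rewrite /plogp; case: Rle_dec => // -[]; apply: Rle_refl. Qed.

Lemma plogp_superadditive a b : (0 <= a)%R -> (0 <= b)%R ->
  (plogp a + plogp b <= plogp (a + b))%R.
Proof.
move=> a_ge0 b_ge0.
case: (Rle_lt_or_eq_dec _ _ a_ge0) => [a_gt0|<-]; last first.
  by rewrite plogp0 !Rplus_0_l; right.
case: (Rle_lt_or_eq_dec _ _ b_ge0) => [b_gt0|<-]; last first.
  by rewrite plogp0 !Rplus_0_r; right.
rewrite /plogp; do 3 case: Rle_dec => /= ?; try lra.
have ln_a : (ln a <= ln (a + b))%R by left; apply: ln_increasing; lra.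
have ln_b : (ln b <= ln (a + b))%R by left; apply: ln_increasing; lra.
have := Rmult_le_compat_l _ _ _ (Rlt_le _ _ a_gt0) ln_a.
have := Rmult_le_compat_l _ _ _ (Rlt_le _ _ b_gt0) ln_b.
rewrite Rmult_plus_distr_r; lra.
Qed.

Lemma marg_entropy_growing (nu : seq bool -> R) :
  (forall w, 0 <= nu w)%R ->
  (forall w, nu w = nu (false :: w) + nu (true :: w))%R ->
  Un_growing (marg_entropy nu).
Proof.
move=> nu_ge0 nu_cons j; apply: Ropp_le_contravar.
pose cons_tuple (p : (j.+1).-tuple bool * bool) : (j.+2).-tuple bool :=
  [tuple of p.2 :: p.1].
have cons_tuple_bij : bijective cons_tuple.
  exists (fun t : (j.+2).-tuple bool => ([tuple of behead t], thead t)).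
    by case=> w b; congr (_, _); apply: val_inj.
  by move=> t; rewrite [RHS]tuple_eta.
rewrite (reindex cons_tuple (onW_bij _ cons_tuple_bij)) /=.
rewrite -(pair_big xpredT xpredT (fun w b => plogp (nu (b :: val w)))) /=.
apply: Rsum_le => w _; rewrite big_bool /= (nu_cons w) Rplus_comm.
exact: plogp_superadditive.
Qed.

Lemma extension_entropy_ge k (muk : Xk k -> R) (nu : seq bool -> R) :
  ti_measure nu -> extends nu muk ->
  forall L, total_entropy_is nu L -> (entropy_Xk muk <= L)%R.
Proof.
case=> _ [nu_ge0 [_ nu_cons]] nu_muk L nu_L.
have -> : entropy_Xk muk = marg_entropy nu k.
  by congr (- _)%R; apply: eq_bigr => x _; rewrite nu_muk.
exact: growing_ineq (marg_entropy_growing nu_ge0 nu_cons) nu_L k.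
Qed.

Lemma porbit_invariant (T : finType) (U : Type) (s : {perm T}) (f : T -> U) x y :
  (forall z, f (s z) = f z) -> y \in porbit s x -> f y = f x.
Proof. by move=> f_s /porbitP[i ->]; rewrite permX; elim: i => //= i <-. Qed.

Lemma card_iter_porbit (T : finType) (s : {perm T}) x (g : pred T) :
  #|[set t : 'I_#|porbit s x| | g (iter t s x)]| = #|[set y in porbit s x | g y]|.
Proof.
pose h (t : 'I_#|porbit s x|) := iter t s x.
have h_inj : injective h.
  move=> a b; rewrite /h -!(nth_traject _ (ltn_ord _)) => /eqP.
  rewrite nth_uniq ?size_traject ?ltn_ord ?uniq_traject_porbit //.
  by move/eqP/val_inj.
suff <- : h @: [set t | g (h t)] = [set y in porbit s x | g y].
  by rewrite card_imset.
apply/setP => y; rewrite inE.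
apply/imsetP/andP => [[t] | []].
  rewrite inE => gt ->; split => //.
  by rewrite porbit_traject; apply/trajectP; exists t.
rewrite porbit_traject => /trajectP[i i_lt ->] gy.
by exists (Ordinal i_lt); rewrite ?inE.
Qed.

Lemma orbit_start_porbit k (s : {perm Xk k}) x :
  orbit_start (porbit s x) \in porbit s x.
Proof.
rewrite /orbit_start; case: pickP => [//|].
by move/(_ x); rewrite porbit_id.
Qed.

Section OrbitMeasure.

Variables (k : nat) (phi : {perm Xk k}).

Definition orbit_word (n : nat) (y : Xk k) : seq bool :=
  mkseq (fun m => tnth (iter m phi y) ord0) n.

Lemma orbit_word_cons n y :
  orbit_word n.+1 y = tnth y ord0 :: orbit_word n (phi y).
Proof.
have iota_succ : iota 0 n.+1 = 0 :: map (addn 1) (iota 0 n) by rewrite -iotaDl.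
rewrite /orbit_word /mkseq iota_succ /= -map_comp.
by congr (_ :: _); apply: eq_map => m /=; rewrite add0n -iterS iterSr.
Qed.

Lemma orbit_word_rcons n y :
  orbit_word n.+1 y = rcons (orbit_word n y) (tnth (iter n phi y) ord0).
Proof. exact: mkseqS. Qed.

Lemma orbit_word_eqE w y :
  (orbit_word (size w) y == w) =
  all (fun m => tnth (iter m phi y) ord0 == nth false w m) (iota 0 (size w)).
Proof.
apply/eqP/allP => [<- m | w_at].
  by rewrite mem_iota size_mkseq => /andP[_ m_lt]; rewrite nth_mkseq.
apply: (@eq_from_nth _ false); rewrite size_mkseq // => m m_lt.
by rewrite nth_mkseq //; apply/eqP/w_at; rewrite mem_iota.
Qed.

Lemma nu_orbit_porbit x w :
  (INR #|porbit phi x| * nu_orbit phi (porbit phi x) w)%R =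
  INR #|[set y in porbit phi x | orbit_word (size w) y == w]|.
Proof.
have := orbit_start_porbit phi x; rewrite /nu_orbit.
move: (orbit_start _) => eta eta_x.
have -> : porbit phi x = porbit phi eta.
  by apply/eqP; rewrite eq_porbit_mem porbit_sym.
have -> : [set t : 'I_#|porbit phi eta| |
           all (fun m => tnth (iter (t + m) phi eta) ord0 == nth false w m)
               (iota 0 (size w))] =
          [set t : 'I_#|porbit phi eta| |
           orbit_word (size w) (iter t phi eta) == w].
  apply/setP => t; rewrite !inE orbit_word_eqE.
  by apply: eq_all => m; rewrite addnC iterD.
rewrite (card_iter_porbit phi eta (fun y => orbit_word (size w) y == w)).
rewrite -Rmult_assoc Rinv_r ?Rmult_1_l //.
exact/not_0_INR/eqP/card_porbit_neq0.
Qed.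

Variable muk : Xk k -> R.
Hypothesis muk_phi : forall eta, muk (phi eta) = muk eta.

Lemma orbit_measureE w :
  orbit_measure muk phi w =
  \big[Rplus/0%R]_(y | orbit_word (size w) y == w) muk y.
Proof.
rewrite (partition_big (porbit phi) (mem (porbits phi))); last first.
  by move=> y _; apply: imset_f.
apply: eq_bigr => _ /imsetP[x _ ->].
rewrite Rmult_assoc nu_orbit_porbit Rmult_comm -Rsum_const.
apply: eq_big => y; first by rewrite inE andbC eq_porbit_mem.
rewrite inE => /andP[y_x _].
rewrite (porbit_invariant muk_phi y_x).
by rewrite (porbit_invariant muk_phi (orbit_start_porbit phi x)).
Qed.

Lemma orbit_measure_ti : prob_Xk muk -> ti_measure (orbit_measure muk phi).
Proof.
case=> muk_ge0 muk_sum1; split; [|split; [|split]] => [|w|w|w];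
  rewrite !orbit_measureE.
- by rewrite -[RHS]muk_sum1; apply: eq_bigl.
- exact: Rsum_ge0.
- rewrite !size_rcons !(big_mkcond (fun y => orbit_word _ y == _)) -big_split.
  apply: eq_bigr => y _; rewrite !orbit_word_rcons !eqseq_rcons.
  case: (orbit_word _ y == w); case: (tnth _ ord0) => /=;
    by rewrite ?Rplus_0_l ?Rplus_0_r.
- rewrite /= !(big_mkcond (fun y => orbit_word _ y == _)) -big_split.
  rewrite (reindex_inj (@perm_inj _ phi)); apply: eq_bigr => y _.
  rewrite !orbit_word_cons !eqseq_cons muk_phi.
  case: (orbit_word _ (phi y) == w); case: (tnth y ord0) => /=;
    by rewrite ?andbF ?Rplus_0_l ?Rplus_0_r.
Qed.

End OrbitMeasure.

Section DeBruijn.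

Variables (k : nat) (phi : {perm Xk k}).
Hypothesis phi_deBruijn : deBruijn_compatible phi.

Lemma nth_perm_deBruijn (y : Xk k) i :
  i < k -> nth false (phi y) i = nth false y i.+1.
Proof.
move=> i_lt; have [b ->] : exists b, y = [tuple of b :: behead_tuple y].
  by exists (thead y); apply: val_inj; case: y => -[].
set xi := behead_tuple y.
have : phi [tuple of b :: xi] \in
       phi @: [set [tuple of false :: xi]; [tuple of true :: xi]].
  by apply: imset_f; case: b; rewrite !inE eqxx ?orbT.
rewrite phi_deBruijn !inE => /orP[] /eqP ->;
  by rewrite /= nth_rcons size_tuple i_lt.
Qed.

Lemma nth_iter_deBruijn (y : Xk k) m i :
  i + m <= k -> nth false (iter m phi y) i = nth false y (i + m).
Proof.
elim: m y i => [|m IH] y i; first by rewrite addn0.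
rewrite addnS => im_lt; rewrite iterSr IH ?nth_perm_deBruijn ?addnS //.
exact: ltnW.
Qed.

Lemma nth_orbit_word n (y : Xk k) m :
  m < n -> m <= k -> nth false (orbit_word phi n y) m = nth false y m.
Proof.
by move=> m_lt m_le; rewrite nth_mkseq // (tnth_nth false) nth_iter_deBruijn.
Qed.

Lemma orbit_word_full (y : Xk k) : orbit_word phi k.+1 y = val y.
Proof.
apply: (@eq_from_nth _ false); rewrite size_mkseq ?size_tuple // => m m_lt.
exact: nth_orbit_word.
Qed.

Lemma orbit_word_inj n : k < n -> injective (orbit_word phi n).
Proof.
move=> k_lt y z yz; apply/val_inj/(@eq_from_nth _ false).
  by rewrite !size_tuple.
move=> m; rewrite size_tuple => m_lt.
by rewrite -!(nth_orbit_word _ (leq_trans m_lt k_lt) m_lt) yz.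
Qed.

Variable muk : Xk k -> R.
Hypothesis muk_phi : forall eta, muk (phi eta) = muk eta.

Lemma orbit_measure_extends : extends (orbit_measure muk phi) muk.
Proof.
move=> x; rewrite orbit_measureE // size_tuple.
rewrite (eq_bigl (pred1 x)) ?big_pred1_eq // => y.
by rewrite /= orbit_word_full val_eqE.
Qed.

Lemma orbit_measure_marg_entropy j :
  k <= j -> marg_entropy (orbit_measure muk phi) j = entropy_Xk muk.
Proof.
move=> k_le_j; congr (- _)%R.
have word_size y : size (orbit_word phi j.+1 y) == j.+1 by rewrite size_mkseq.
pose word_tuple y := Tuple (word_size y).
have word_tuple_inj : injective word_tuple.
  by move=> y z /(congr1 val); apply: orbit_word_inj.
rewrite [RHS](partition_big word_tuple xpredT) //=.
apply: eq_bigr => w _; rewrite orbit_measureE // size_tuple.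
rewrite (eq_bigl (fun y => word_tuple y == w)) => [|y]; last by rewrite -val_eqE.
case: (pickP (fun y => word_tuple y == w)) => [y0 /eqP w_y0 | no_y]; last first.
  by rewrite !big_pred0 // plogp0.
have w_y : (fun y => word_tuple y == w) =1 pred1 y0.
  by move=> y /=; rewrite -w_y0 (inj_eq word_tuple_inj).
by rewrite !(big_pred1 y0 w_y).
Qed.

Lemma orbit_measure_total_entropy :
  total_entropy_is (orbit_measure muk phi) (entropy_Xk muk).
Proof.
move=> eps eps_gt0; exists k => j /leP k_le_j.
by rewrite orbit_measure_marg_entropy // /R_dist Rminus_diag Rabs_R0.
Qed.

End DeBruijn.

Unset Implicit Arguments.

Theorem mainTheorem9 (k : nat) (muk : Xk k -> R) (phi : {perm Xk k}) :
  (1 <= k)%N ->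
  prob_Xk muk ->
  LTI muk ->
  (forall eta, muk (phi eta) = muk eta) ->
  deBruijn_compatible phi ->
  let mu := orbit_measure muk phi in
  ti_measure mu /\
  extends mu muk /\
  total_entropy_is mu (entropy_Xk muk) /\
  (forall nu : seq bool -> R, ti_measure nu -> extends nu muk ->
     forall L, total_entropy_is nu L -> (entropy_Xk muk <= L)%R).
Proof.
move=> _ muk_prob _ muk_phi phi_deBruijn mu.
split; first exact: orbit_measure_ti.
split; first exact: orbit_measure_extends.
split; first exact: orbit_measure_total_entropy.
exact: extension_entropy_ge.
Qed.
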